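(* Let $L$ be a Lie algebra over a field $K$ of characteristic different from $2$ and $3$. If $L$ possesses a nonzero commutative $2$-cocycle, then $L$ has a nonzero homomorphic image satisfying the standard identity of degree $5$: $$\sum_{\sigma\in S_4}\operatorname{sgn}(\sigma)\,[[[[y,x_{\sigma(1)}],x_{\sigma(2)}],x_{\sigma(3)}],x_{\sigma(4)}]=0\quad\text{for all } x_1,\dots,x_4,y.$$
   Context: A commutative $2$-cocycle on $L$ is a symmetric bilinear form $\varphi:L\times L\to K$ such that $\varphi([x,y],z)+\varphi([z,x],y)+\varphi([y,z],x)=0$ for all $x,y,z\in L$. *)

From HB Require Import structures.
From mathcomp Require Import all_boot all_order all_algebra all_fingroup.
Set Implicit Arguments. Unset Strict Implicit. Unset Printing Implicit Defensive.
Import GRing.Theory.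
Local Open Scope ring_scope.

Definition is_lie_bracket (K : fieldType) (V : lmodType K) (br : V -> V -> V) : Prop :=
  [/\ (forall (a : K) (x y z : V), br (a *: x + y) z = a *: br x z + br y z),
      (forall (a : K) (x y z : V), br z (a *: x + y) = a *: br z x + br z y),
      (forall x : V, br x x = 0) &
      (forall x y z : V, br (br x y) z + br (br y z) x + br (br z x) y = 0)].

Definition bilinear_form (K : fieldType) (V : lmodType K) (phi : V -> V -> K) : Prop :=
  (forall (a : K) (x y z : V), phi (a *: x + y) z = a * phi x z + phi y z) /\
  (forall (a : K) (x y z : V), phi z (a *: x + y) = a * phi z x + phi z y).

Definition comm_2cocycle (K : fieldType) (V : lmodType K) (br : V -> V -> V)
  (phi : V -> V -> K) : Prop :=
  [/\ bilinear_form phi,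
      (forall x y : V, phi x y = phi y x) &
      (forall x y z : V, phi (br x y) z + phi (br z x) y + phi (br y z) x = 0)].

Definition lie_hom (K : fieldType) (V W : lmodType K) (brV : V -> V -> V)
  (brW : W -> W -> W) (f : V -> W) : Prop :=
  (forall (a : K) (x y : V), f (a *: x + y) = a *: f x + f y) /\
  (forall x y : V, f (brV x y) = brW (f x) (f y)).

Definition std5 (K : fieldType) (V : lmodType K) (br : V -> V -> V)
  (x : 'I_4 -> V) (y : V) : V :=
  \sum_(s : 'S_4) ((-1) ^+ (odd_perm s) : K) *:
     br (br (br (br y (x (s (inord 0)))) (x (s (inord 1)))) (x (s (inord 2))))
        (x (s (inord 3))).

Definition satisfies_std5 (K : fieldType) (V : lmodType K) (br : V -> V -> V) : Prop :=
  forall (x : 'I_4 -> V) (y : V), std5 br x y = 0.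

From HB Require Import structures.
From mathcomp Require Import all_boot all_order all_algebra all_fingroup.
From Stdlib Require Import ClassicalEpsilon FunctionalExtensionality PropExtensionality.
Set Implicit Arguments. Unset Strict Implicit. Unset Printing Implicit Defensive.
Import GRing.Theory.
Local Open Scope ring_scope.

(* A commutative 2-cocycle phi vanishes on the values of the standard polynomial:
   6 phi(std5(x; y), u) is an integer combination of instances of the cocycle identity
   modulo antisymmetry and the Jacobi identity, which is checked by computation on normal
   forms of bracket monomials. As ad z is a derivation, the values of std5 are stable under
   right multiplication, so they lie in the ideal I of all a with
   phi([..[a, z_1], ..., z_k], u) = 0 for all z_i and u. A vector x with phi(x, y) <> 0 is
   not in I, so L/I is a nonzero homomorphic image of L satisfying std5 (6 is invertible
   since char K is neither 2 nor 3). *)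

Section LieAlgebra.
Variables (K : fieldType) (L : lmodType K) (br : L -> L -> L).
Hypothesis brL : is_lie_bracket br.

Lemma brDl x y z : br (x + y) z = br x z + br y z.
Proof. by case: brL => brl _ _ _; have := brl 1 x y z; rewrite !scale1r. Qed.

Lemma brDr x y z : br z (x + y) = br z x + br z y.
Proof. by case: brL => _ brr _ _; have := brr 1 x y z; rewrite !scale1r. Qed.

Lemma br0l z : br 0 z = 0.
Proof. by apply/(addrI (br 0 z)); rewrite -brDl !addr0. Qed.

Lemma br0r z : br z 0 = 0.
Proof. by apply/(addrI (br z 0)); rewrite -brDr !addr0. Qed.

Lemma brZl a x z : br (a *: x) z = a *: br x z.
Proof. by case: brL => brl _ _ _; have := brl a x 0 z; rewrite !addr0 br0l addr0. Qed.

Lemma brZr a x z : br z (a *: x) = a *: br z x.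
Proof. by case: brL => _ brr _ _; have := brr a x 0 z; rewrite !addr0 br0r addr0. Qed.

Lemma brNl x z : br (- x) z = - br x z.
Proof. by rewrite -scaleN1r brZl scaleN1r. Qed.

Lemma brNr x z : br z (- x) = - br z x.
Proof. by rewrite -scaleN1r brZr scaleN1r. Qed.

Lemma brMzl x z n : br (x *~ n) z = br x z *~ n.
Proof. by rewrite -!scaler_int brZl. Qed.

Lemma brMzr x z n : br z (x *~ n) = br z x *~ n.
Proof. by rewrite -!scaler_int brZr. Qed.

Lemma br_suml I r (F : I -> L) z : br (\sum_(i <- r) F i) z = \sum_(i <- r) br (F i) z.
Proof. exact: (big_morph (br^~ z) (fun x y => brDl x y z) (br0l z)). Qed.

Lemma br_anticomm x y : br x y = - br y x.
Proof.
case: brL => _ _ brxx _; have := brxx (x + y).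
by rewrite brDl !brDr !brxx add0r addr0 => /eqP; rewrite addr_eq0 => /eqP.
Qed.

Lemma br_derivation p q z : br (br p q) z = br (br p z) q + br p (br q z).
Proof.
case: brL => _ _ _ /(_ p q z); rewrite (br_anticomm (br q z)) (br_anticomm z) brNl.
by move/eqP; rewrite subr_eq0 subr_eq => /eqP.
Qed.

Definition br_at (x : 'I_4 -> L) (i : 'I_4) (z : L) : 'I_4 -> L :=
  fun k => if k == i then br (x k) z else x k.

(* ad z is a derivation, so it acts on the multilinear polynomial std5 letter by letter. *)
Lemma br_std5 x y z :
  br (std5 br x y) z = std5 br x (br y z) + \sum_(i < 4) std5 br (br_at x i z) y.
Proof.
have br_monomial y0 a b c d : br (br (br (br (br y0 a) b) c) d) z =
    br (br (br (br (br y0 z) a) b) c) d + (br (br (br (br y0 (br a z)) b) c) d +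
    (br (br (br (br y0 a) (br b z)) c) d + (br (br (br (br y0 a) b) (br c z)) d +
    (br (br (br (br y0 a) b) c) (br d z) + 0)))).
  rewrite br_derivation (br_derivation (br (br _ a) b)) !brDl (br_derivation (br _ a)) !brDl.
  by rewrite (br_derivation y0) !brDl !addrA addr0.
rewrite /std5 br_suml exchange_big -big_split /=.
apply: eq_bigr => s _; rewrite brZl -scaler_sumr -scalerDr; congr (_ *: _).
rewrite br_monomial (reindex_inj (@perm_inj _ s)) /= !big_ord_recl big_ord0 /=.
by rewrite /br_at !(inj_eq perm_inj) -!val_eqE /= !inordK.
Qed.

Lemma foldl_br0 zs : foldl br 0 zs = 0.
Proof. by elim: zs => [|z zs IH] //=; rewrite br0l. Qed.

Lemma foldl_brD zs p q : foldl br (p + q) zs = foldl br p zs + foldl br q zs.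
Proof. by elim: zs p q => [|z zs IH] p q //=; rewrite brDl IH. Qed.

Lemma foldl_brZ zs a p : foldl br (a *: p) zs = a *: foldl br p zs.
Proof. by elim: zs p => [|z zs IH] p //=; rewrite brZl IH. Qed.

End LieAlgebra.

Section Cocycle.
Variables (K : fieldType) (L : lmodType K) (br : L -> L -> L) (phi : L -> L -> K).
Hypothesis phi_coc : comm_2cocycle br phi.

Lemma phiC x y : phi x y = phi y x.
Proof. by case: phi_coc. Qed.

Lemma phiDl x y z : phi (x + y) z = phi x z + phi y z.
Proof. by case: phi_coc => -[phil _] _ _; have := phil 1 x y z; rewrite scale1r mul1r. Qed.

Lemma phi0l z : phi 0 z = 0.
Proof. by apply/(addrI (phi 0 z)); rewrite -phiDl !addr0. Qed.

Lemma phiZl a x z : phi (a *: x) z = a * phi x z.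
Proof. by case: phi_coc => -[phil _] _ _; have := phil a x 0 z; rewrite !addr0 phi0l addr0. Qed.

Lemma phiMzl x z n : phi (x *~ n) z = phi x z *~ n.
Proof. by rewrite -scaler_int phiZl mulrzl. Qed.

Lemma phiMzr x z n : phi z (x *~ n) = phi z x *~ n.
Proof. by rewrite phiC phiMzl phiC. Qed.

Lemma phi_suml I r (F : I -> L) z : phi (\sum_(i <- r) F i) z = \sum_(i <- r) phi (F i) z.
Proof. exact: (big_morph (phi^~ z) (fun x y => phiDl x y z) (phi0l z)). Qed.

Lemma phi_sumr I r (F : I -> L) z : phi z (\sum_(i <- r) F i) = \sum_(i <- r) phi z (F i).
Proof. by rewrite phiC phi_suml; apply: eq_bigr => i _; rewrite phiC. Qed.

Lemma phi_cocycle x y z : phi (br x y) z + phi (br z x) y + phi (br y z) x = 0.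
Proof. by case: phi_coc. Qed.

End Cocycle.

Definition subspace (K : fieldType) (L : lmodType K) (I : L -> Prop) : Prop :=
  I 0 /\ forall (a : K) (p q : L), I p -> I q -> I (a *: p + q).

Section SubspaceRepr.
Variables (K : fieldType) (L : lmodType K) (I : L -> Prop).
Hypothesis I_sub : subspace I.

Lemma subspace0 : I 0.
Proof. by case: I_sub. Qed.

Lemma subspaceZ a p : I p -> I (a *: p).
Proof. by case: I_sub => I0 Ilin Ip; rewrite -[_ *: _]addr0; apply: Ilin. Qed.

Lemma subspaceD p q : I p -> I q -> I (p + q).
Proof. by case: I_sub => _ Ilin Ip Iq; rewrite -[p]scale1r; apply: Ilin. Qed.

Lemma subspaceN p : I p -> I (- p).
Proof. by rewrite -scaleN1r; apply: subspaceZ. Qed.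

Lemma subspaceB p q : I p -> I q -> I (p - q).
Proof. by move=> Ip /subspaceN; apply: subspaceD. Qed.

Definition qrepr (a : L) : L := epsilon (inhabits 0) (fun b => I (b - a)).

Lemma qrepr_spec a : I (qrepr a - a).
Proof.
apply: (epsilon_spec (inhabits 0) (fun b => I (b - a))).
by exists a; rewrite subrr; apply: subspace0.
Qed.

Lemma qrepr_eq a b : I (a - b) -> qrepr a = qrepr b.
Proof.
move=> Iab; rewrite /qrepr; congr epsilon; apply: functional_extensionality => c.
apply: propositional_extensionality; split => Ic.
  by have := subspaceD Ic Iab; rewrite addrA subrK.
by have := subspaceB Ic Iab; rewrite opprB subrKA.
Qed.

Lemma qrepr_inj a b : qrepr a = qrepr b -> I (a - b).
Proof.
move=> ab; have := subspaceB (qrepr_spec b) (qrepr_spec a).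
by rewrite ab opprB addrC subrKA.
Qed.

Lemma qreprK a : qrepr (qrepr a) = qrepr a.
Proof. exact/qrepr_eq/qrepr_spec. Qed.

End SubspaceRepr.

Record quot (K : fieldType) (L : lmodType K) (I : L -> Prop) (I_sub : subspace I) :=
  Quot { qval : L; qvalP : qrepr I qval == qval }.

HB.instance Definition _ (K : fieldType) (L : lmodType K) (I : L -> Prop)
  (I_sub : subspace I) := [isSub for @qval K L I I_sub].
HB.instance Definition _ (K : fieldType) (L : lmodType K) (I : L -> Prop)
  (I_sub : subspace I) := [Choice of @quot K L I I_sub by <:].

Section QuotientZmod.
Variables (K : fieldType) (L : lmodType K) (I : L -> Prop) (I_sub : subspace I).
Local Notation M := (quot I_sub).

Definition qpi (a : L) : M := Quot I_sub (introT eqP (qreprK I_sub a)).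

Lemma qvalK m : qpi (qval m) = m.
Proof. by apply: val_inj => /=; apply/eqP; case: m. Qed.

Lemma qpi_ind (P : M -> Prop) : (forall a, P (qpi a)) -> forall m, P m.
Proof. by move=> Pqpi m; rewrite -(qvalK m). Qed.

Lemma qpi_eq a b : I (a - b) -> qpi a = qpi b.
Proof. by move=> Iab; apply: val_inj => /=; apply: (qrepr_eq I_sub). Qed.

Lemma qpi_inj a b : qpi a = qpi b -> I (a - b).
Proof. by move/(congr1 val) => /=; apply: (qrepr_inj I_sub). Qed.

Lemma I_qval a : I (qval (qpi a) - a).
Proof. exact: (qrepr_spec I_sub). Qed.

Definition qadd (m n : M) : M := qpi (qval m + qval n).
Definition qopp (m : M) : M := qpi (- qval m).
Definition qscale (c : K) (m : M) : M := qpi (c *: qval m).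

Lemma qaddE a b : qadd (qpi a) (qpi b) = qpi (a + b).
Proof. by apply: qpi_eq; rewrite opprD addrACA; apply: (subspaceD I_sub); apply: I_qval. Qed.

Lemma qoppE a : qopp (qpi a) = qpi (- a).
Proof. by apply: qpi_eq; rewrite -opprD; apply/(subspaceN I_sub)/I_qval. Qed.

Lemma qscaleE c a : qscale c (qpi a) = qpi (c *: a).
Proof. by apply: qpi_eq; rewrite -scalerBr; apply/(subspaceZ I_sub)/I_qval. Qed.

Lemma qaddA : associative qadd.
Proof. by elim/qpi_ind => a; elim/qpi_ind => b; elim/qpi_ind => c; rewrite !qaddE addrA. Qed.

Lemma qaddC : commutative qadd.
Proof. by elim/qpi_ind => a; elim/qpi_ind => b; rewrite !qaddE addrC. Qed.

Lemma qadd0 : left_id (qpi 0) qadd.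
Proof. by elim/qpi_ind => a; rewrite qaddE add0r. Qed.

Lemma qaddN : left_inverse (qpi 0) qopp qadd.
Proof. by elim/qpi_ind => a; rewrite qoppE qaddE addNr. Qed.

End QuotientZmod.

HB.instance Definition _ (K : fieldType) (L : lmodType K) (I : L -> Prop)
    (I_sub : subspace I) :=
  GRing.isZmodule.Build (@quot K L I I_sub) (@qaddA K L I I_sub) (@qaddC K L I I_sub)
    (@qadd0 K L I I_sub) (@qaddN K L I I_sub).

Section QuotientLmod.
Variables (K : fieldType) (L : lmodType K) (I : L -> Prop) (I_sub : subspace I).
Local Notation M := (quot I_sub).
Local Notation qpi := (qpi I_sub).

Lemma qpi0 : qpi 0 = 0.
Proof. by []. Qed.

Lemma qpiD a b : qpi (a + b) = qpi a + qpi b.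
Proof. by rewrite -qaddE. Qed.

Lemma qscaleA a b (m : M) : qscale a (qscale b m) = qscale (a * b) m.
Proof. by elim/qpi_ind: m => x; rewrite !qscaleE scalerA. Qed.

Lemma qscale1 : left_id 1 (@qscale K L I I_sub).
Proof. by elim/qpi_ind => x; rewrite qscaleE scale1r. Qed.

Lemma qscaleDr : right_distributive (@qscale K L I I_sub) +%R.
Proof.
by move=> a; elim/qpi_ind => x; elim/qpi_ind => y; rewrite -qpiD !qscaleE -qpiD scalerDr.
Qed.

Lemma qscaleDl (m : M) : {morph (fun a => qscale a m) : a b / a + b}.
Proof. by move=> a b; elim/qpi_ind: m => x; rewrite !qscaleE -qpiD scalerDl. Qed.

End QuotientLmod.

HB.instance Definition _ (K : fieldType) (L : lmodType K) (I : L -> Prop)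
    (I_sub : subspace I) :=
  GRing.Zmodule_isLmodule.Build K (@quot K L I I_sub) (@qscaleA K L I I_sub)
    (@qscale1 K L I I_sub) (@qscaleDr K L I I_sub) (@qscaleDl K L I I_sub).

Lemma qpiZ (K : fieldType) (L : lmodType K) (I : L -> Prop) (I_sub : subspace I) c a :
  qpi I_sub (c *: a) = c *: qpi I_sub a.
Proof. by rewrite -qscaleE. Qed.

Section LieQuotient.
Variables (K : fieldType) (L : lmodType K) (br : L -> L -> L) (I : L -> Prop).
Variable I_sub : subspace I.
Hypotheses (brL : is_lie_bracket br) (I_br : forall p z, I p -> I (br p z)).
Local Notation M := (quot I_sub).
Local Notation qpi := (qpi I_sub).

Definition qbr (m n : M) : M := qpi (br (qval m) (qval n)).

Lemma qbrE a b : qbr (qpi a) (qpi b) = qpi (br a b).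
Proof.
apply: qpi_eq; set a' := qval (qpi a); set b' := qval (qpi b).
have -> : br a' b' - br a b = br (a' - a) b' + br a (b' - b).
  by rewrite (brDl brL) (brDr brL) (brNl brL) (brNr brL) addrA subrK.
apply: (subspaceD I_sub); first by apply: I_br; apply: I_qval.
by rewrite (br_anticomm brL); apply: (subspaceN I_sub); apply: I_br; apply: I_qval.
Qed.

Lemma qbr_lie : is_lie_bracket qbr.
Proof.
case: brL => brl brr brxx jacobi; split.
- move=> a; elim/qpi_ind => x; elim/qpi_ind => y; elim/qpi_ind => z.
  by rewrite -qpiZ -qpiD !qbrE brl qpiD qpiZ.
- move=> a; elim/qpi_ind => x; elim/qpi_ind => y; elim/qpi_ind => z.
  by rewrite -qpiZ -qpiD !qbrE brr qpiD qpiZ.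
- by elim/qpi_ind => x; rewrite qbrE brxx.
- elim/qpi_ind => x; elim/qpi_ind => y; elim/qpi_ind => z.
  by rewrite !qbrE -[RHS]qpi0 -(jacobi x y z) !qpiD.
Qed.

Lemma qpi_lie_hom : lie_hom br qbr qpi.
Proof. by split=> [a x y | x y]; rewrite ?qpiD ?qpiZ ?qbrE. Qed.

End LieQuotient.

Arguments qbr {K L} br {I} I_sub m n.

Lemma lie_hom_std5 (K : fieldType) (V W : lmodType K) (brV : V -> V -> V) (brW : W -> W -> W)
    (f : V -> W) : lie_hom brV brW f ->
  forall x y, f (std5 brV x y) = std5 brW (f \o x) (f y).
Proof.
case=> f_lin f_br x y.
have fD a b : f (a + b) = f a + f b by have := f_lin 1 a b; rewrite !scale1r.
have f0 : f 0 = 0 by apply/(addrI (f 0)); rewrite -fD !addr0.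
have fZ c a : f (c *: a) = c *: f a by rewrite -[_ *: a]addr0 f_lin f0 addr0.
rewrite /std5 (big_morph f fD f0); apply: eq_bigr => s _.
by rewrite fZ !f_br.
Qed.

Lemma quot_std5 (K : fieldType) (L : lmodType K) (br : L -> L -> L) (I : L -> Prop)
    (I_sub : subspace I) :
  is_lie_bracket br -> (forall p z, I p -> I (br p z)) -> (forall x y, I (std5 br x y)) ->
  satisfies_std5 (qbr br I_sub).
Proof.
move=> brL I_br I_std5 x; elim/qpi_ind => y.
have -> : x = qpi I_sub \o (fun i => qval (x i)).
  by apply: functional_extensionality => i; rewrite /= qvalK.
rewrite -(lie_hom_std5 (qpi_lie_hom I_sub brL I_br)) -qpi0.
by apply: qpi_eq; rewrite subr0.
Qed.

Definition zscale (T : Type) (z : int) (c : seq (int * T)) : seq (int * T) :=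
  [seq (z * p.1, p.2) | p <- c].

Fixpoint coef (T : eqType) (k : T) (c : seq (int * T)) : int :=
  if c is p :: c' then (if p.2 == k then p.1 else 0) + coef k c' else 0.

Definition zero_comb (T : eqType) (c : seq (int * T)) : bool :=
  all (fun k => coef k c == 0) (undup (map snd c)).

Section IntCombination.
Variables (V : zmodType) (T : Type) (f : T -> V).

Definition zeval (c : seq (int * T)) : V := \sum_(p <- c) f p.2 *~ p.1.

Lemma zeval_cat c1 c2 : zeval (c1 ++ c2) = zeval c1 + zeval c2.
Proof. exact: big_cat. Qed.

Lemma zeval_zscale z c : zeval (zscale z c) = zeval c *~ z.
Proof. by rewrite /zeval big_map mulrz_suml; apply: eq_bigr => p _; rewrite mulrC mulrzA. Qed.

Lemma zeval_flatten (I : Type) (F : I -> seq (int * T)) r :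
  zeval (flatten (map F r)) = \sum_(i <- r) zeval (F i).
Proof.
elim: r => [|i r IH]; first by rewrite /zeval !big_nil.
by rewrite big_cons /= zeval_cat IH.
Qed.

End IntCombination.

Lemma coefE (T : eqType) (k : T) c : coef k c = \sum_(p <- c | p.2 == k) p.1.
Proof. by elim: c => [|p c IH] /=; rewrite ?big_nil // big_mkcond big_cons -big_mkcond IH. Qed.

Lemma zeval_zero_comb (V : zmodType) (T : eqType) (f : T -> V) c :
  zero_comb c -> zeval f c = 0.
Proof.
move=> /allP c0; set ks := undup (map snd c).
have split_key p : p \in c ->
    f p.2 *~ p.1 = \sum_(k <- ks) (if p.2 == k then f k *~ p.1 else 0).
  move=> cp; rewrite (bigD1_seq p.2) ?undup_uniq ?mem_undup ?map_f //= eqxx.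
  by rewrite big1 ?addr0 // => k /negbTE; rewrite eq_sym => ->.
rewrite /zeval big_seq (eq_bigr _ split_key) -big_seq exchange_big big1_seq // => k ksk.
by rewrite -big_mkcond -mulrz_sumr -coefE (eqP (c0 k ksk)) mulr0z.
Qed.

Lemma foldl_minn_mem a r : foldl minn a r \in a :: r.
Proof.
elim: r a => [|x r IH] a /=; first by rewrite inE.
have := IH (minn a x); rewrite !inE => /orP[/eqP ->|->]; last by rewrite !orbT.
by rewrite /minn; case: ltnP; rewrite eqxx ?orbT.
Qed.

(* A word (i, [:: j1; ...; jk]) stands for the left-normed bracket
   [..[[e_i, e_j1], e_j2], ..., e_jk]. *)
Definition word := (nat * seq nat)%type.

Definition br_letter (c : seq (int * word)) (n : nat) : seq (int * word) :=
  [seq (p.1, (p.2.1, rcons p.2.2 n)) | p <- c].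

(* The bracket [c, w] with the word w = (h, rev rr), expanded by the derivation rule
   [c, [w', n]] = [[c, w'], n] - [[c, n], w']; the tail is kept reversed so that its last
   letter comes first. *)
Fixpoint br_word_rev (c : seq (int * word)) (h : nat) (rr : seq nat) : seq (int * word) :=
  if rr is n :: rr' then
    br_letter (br_word_rev c h rr') n ++ zscale (-1) (br_word_rev (br_letter c n) h rr')
  else br_letter c h.

Fixpoint wcomb_br (c1 c2 : seq (int * word)) : seq (int * word) :=
  if c2 is p :: c2' then zscale p.1 (br_word_rev c1 p.2.1 (rev p.2.2)) ++ wcomb_br c1 c2'
  else [::].

Inductive expr := EVar of nat | EBr of expr & expr.

Fixpoint expand (t : expr) : seq (int * word) :=
  match t with
  | EVar n => [:: (1, (n, [::]))]
  | EBr a b => wcomb_br (expand a) (expand b)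
  end.

(* Moves the least letter m of a word to the front, using [w, e_m] = - [e_m, w]. *)
Definition least_first (w : word) : seq (int * word) :=
  let m := foldl minn w.1 w.2 in
  if w.1 == m then [:: (1, w)] else
  let i := index m w.2 in
  foldl br_letter (zscale (-1) (br_word_rev [:: (1, (m, [::]))] w.1 (rev (take i w.2))))
    (drop i.+1 w.2).

Definition normal (t : expr) : seq (int * word) :=
  flatten [seq zscale p.1 (least_first p.2) | p <- expand t].

Definition sort_pair (w1 w2 : word) : word * word :=
  if (w1.1 <= w2.1)%N then (w1, w2) else (w2, w1).

Definition pair_comb (c1 c2 : seq (int * word)) : seq (int * (word * word)) :=
  [seq (p.1 * q.1, sort_pair p.2 q.2) | p <- c1, q <- c2].

Definition phi_normal (a b : expr) : seq (int * (word * word)) :=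
  pair_comb (normal a) (normal b).

Definition cocycle_rel (r : expr * expr * expr) : seq (int * (word * word)) :=
  let: (a, b, c) := r in phi_normal (EBr a b) c ++ phi_normal (EBr c a) b ++ phi_normal (EBr b c) a.

Definition cert_comb (cert : seq (int * (expr * expr * expr))) : seq (int * (word * word)) :=
  flatten [seq zscale (- p.1) (cocycle_rel p.2) | p <- cert].

Definition target_comb (l : seq (int * expr)) (u : expr) : seq (int * (word * word)) :=
  flatten [seq zscale p.1 (phi_normal p.2 u) | p <- l].

Section CertificateSoundness.
Variables (K : fieldType) (L : lmodType K) (br : L -> L -> L) (phi : L -> L -> K).
Hypotheses (brL : is_lie_bracket br) (phi_coc : comm_2cocycle br phi).
Variable e : nat -> L.

Definition eval_word (w : word) : L := foldl (fun a n => br a (e n)) (e w.1) w.2.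

Fixpoint eval (t : expr) : L :=
  match t with EVar n => e n | EBr a b => br (eval a) (eval b) end.

Local Notation wval := (zeval eval_word).
Local Notation pval := (zeval (fun ww : word * word => phi (eval_word ww.1) (eval_word ww.2))).

Lemma wval_br_letter c n : wval (br_letter c n) = br (wval c) (e n).
Proof.
rewrite /zeval big_map (br_suml brL); apply: eq_bigr => p _ /=.
by rewrite (brMzl brL) /eval_word foldl_rcons.
Qed.

Lemma wval_br_word_rev rr c h : wval (br_word_rev c h rr) = br (wval c) (eval_word (h, rev rr)).
Proof.
elim: rr c => [|n rr IH] c /=; first by rewrite wval_br_letter.
rewrite zeval_cat zeval_zscale !wval_br_letter !IH wval_br_letter rev_cons mulrN1z.
rewrite [eval_word (h, rcons _ _)]/eval_word /= foldl_rcons -/(eval_word (h, rev rr)).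
by rewrite (br_derivation brL (wval c)) addrAC subrr add0r.
Qed.

Lemma wval_wcomb_br c1 c2 : wval (wcomb_br c1 c2) = br (wval c1) (wval c2).
Proof.
elim: c2 => [|p c2 IH] /=; first by rewrite /zeval big_nil (br0r brL).
rewrite zeval_cat zeval_zscale IH wval_br_word_rev revK /zeval big_cons (brDr brL).
by rewrite (brMzr brL); case: p.
Qed.

Lemma wval_expand t : wval (expand t) = eval t.
Proof.
elim: t => [n|a IHa b IHb] /=; first by rewrite /zeval big_seq1.
by rewrite wval_wcomb_br IHa IHb.
Qed.

Lemma wval_foldl_br_letter r c :
  wval (foldl br_letter c r) = foldl (fun a n => br a (e n)) (wval c) r.
Proof. by elim: r c => [|n r IH] c //=; rewrite IH wval_br_letter. Qed.

Lemma wval_least_first w : wval (least_first w) = eval_word w.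
Proof.
case: w => h r; rewrite /least_first /=; set m := foldl minn h r.
case: ifP => [_|hm]; first by rewrite /zeval big_seq1.
have mr : m \in r.
  by move: (foldl_minn_mem h r); rewrite inE eq_sym -/m hm.
rewrite wval_foldl_br_letter zeval_zscale wval_br_word_rev revK /zeval big_seq1.
rewrite mulr1z mulrN1z -(br_anticomm brL) /eval_word /=.
rewrite -[in RHS](cat_take_drop (index m r) r) foldl_cat.
by rewrite [in RHS](drop_nth m) ?index_mem //= nth_index.
Qed.

Lemma wval_normal t : wval (normal t) = eval t.
Proof.
rewrite /normal zeval_flatten -wval_expand /zeval.
by apply: eq_bigr => p _; rewrite -/(zeval _ _) zeval_zscale wval_least_first.
Qed.

Lemma pval_pair_comb c1 c2 : pval (pair_comb c1 c2) = phi (wval c1) (wval c2).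
Proof.
rewrite /pair_comb /zeval big_allpairs_dep (phi_suml phi_coc); apply: eq_bigr => p _.
rewrite (phiMzl phi_coc) (phi_sumr phi_coc) mulrz_suml; apply: eq_bigr => q _ /=.
rewrite (phiMzr phi_coc) -mulrzA mulrC.
by rewrite /sort_pair; case: ifP => //= _; rewrite (phiC phi_coc).
Qed.

Lemma pval_phi_normal a b : pval (phi_normal a b) = phi (eval a) (eval b).
Proof. by rewrite pval_pair_comb !wval_normal. Qed.

Lemma pval_cert_comb cert : pval (cert_comb cert) = 0.
Proof.
rewrite zeval_flatten big1 // => -[z [[a b] c]] _.
by rewrite zeval_zscale !zeval_cat !pval_phi_normal /= addrA (phi_cocycle phi_coc) mul0rz.
Qed.

Lemma certificate_sound l u cert : zero_comb (target_comb l u ++ cert_comb cert) ->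
  \sum_(p <- l) phi (eval p.2) (eval u) *~ p.1 = 0.
Proof.
move=> /(zeval_zero_comb (fun ww : word * word => phi (eval_word ww.1) (eval_word ww.2))).
rewrite zeval_cat pval_cert_comb addr0 zeval_flatten => target0.
rewrite -[RHS]target0; apply: eq_bigr => p _.
by rewrite zeval_zscale pval_phi_normal.
Qed.

End CertificateSoundness.

Lemma sum_perm_lift (V : zmodType) n (F : 'S_n.+1 -> V) :
  \sum_(s : 'S_n.+1) F s = \sum_(j : 'I_n.+1) \sum_(s : 'S_n) F (lift_perm ord0 j s).
Proof.
rewrite (partition_big (fun s : 'S_n.+1 => s ord0) predT) //=.
apply: eq_bigr => j0 _; set i0 := (ord0 : 'I_n.+1).
rewrite (reindex (lift_perm i0 j0)); last first.
  pose ulsf i (s : 'S_n.+1) k := odflt k (unlift (s i) (s (lift i k))).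
  have ulsfK i (s : 'S_n.+1) k : lift (s i) (ulsf i s k) = s (lift i k).
    rewrite /ulsf; have := neq_lift i k.
    by rewrite -(can_eq (permK s)) => /unlift_some[] ? ? ->.
  have inj_ulsf : injective (ulsf i0 _).
    move=> s; apply: can_inj (ulsf (s i0) s^-1%g) _ => k'.
    by rewrite {1}/ulsf ulsfK !permK liftK.
  exists (fun s => perm (inj_ulsf s)) => [s _ | s].
    by apply/permP => k'; rewrite permE /ulsf lift_perm_lift lift_perm_id liftK.
  move/(s _ =P _) => si0; apply/permP => k.
  case: (unliftP i0 k) => [k'|] ->; rewrite ?lift_perm_id //.
  by rewrite lift_perm_lift -si0 permE ulsfK.
by apply: eq_bigl => s; rewrite lift_perm_id eqxx.
Qed.

Lemma sum_perm0 (V : zmodType) (F : 'S_0 -> V) : \sum_(s : 'S_0) F s = F 1%g.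
Proof. by rewrite (big_pred1 1%g) // => s /=; apply/esym/eqP/permP => -[]. Qed.

(* The permutations of 'I_4 with their parities, in the order produced by sum_perm_lift. *)
Definition perm4_table : seq (bool * seq nat) := ([::
  (false, [:: 0; 1; 2; 3]); (true, [:: 0; 1; 3; 2]); (true, [:: 0; 2; 1; 3]);
  (false, [:: 0; 2; 3; 1]); (false, [:: 0; 3; 1; 2]); (true, [:: 0; 3; 2; 1]);
  (true, [:: 1; 0; 2; 3]); (false, [:: 1; 0; 3; 2]); (false, [:: 1; 2; 0; 3]);
  (true, [:: 1; 2; 3; 0]); (true, [:: 1; 3; 0; 2]); (false, [:: 1; 3; 2; 0]);
  (false, [:: 2; 0; 1; 3]); (true, [:: 2; 0; 3; 1]); (true, [:: 2; 1; 0; 3]);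
  (false, [:: 2; 1; 3; 0]); (false, [:: 2; 3; 0; 1]); (true, [:: 2; 3; 1; 0]);
  (true, [:: 3; 0; 1; 2]); (false, [:: 3; 0; 2; 1]); (false, [:: 3; 1; 0; 2]);
  (true, [:: 3; 1; 2; 0]); (true, [:: 3; 2; 0; 1]); (false, [:: 3; 2; 1; 0])])%N.

Lemma sum_perm4 (V : zmodType) (F : bool -> nat -> nat -> nat -> nat -> V) :
  \sum_(s : 'S_4) F (odd_perm s) (s (inord 0)) (s (inord 1)) (s (inord 2)) (s (inord 3)) =
  \sum_(p <- perm4_table) F p.1 (nth 0%N p.2 0) (nth 0%N p.2 1) (nth 0%N p.2 2) (nth 0%N p.2 3).
Proof.
have -> : inord 0 = ord0 :> 'I_4 by apply: val_inj; rewrite /= inordK.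
have -> : inord 1 = lift ord0 ord0 :> 'I_4 by apply: val_inj; rewrite /= inordK.
have -> : inord 2 = lift ord0 (lift ord0 ord0) :> 'I_4 by apply: val_inj; rewrite /= inordK.
have -> : inord 3 = lift ord0 (lift ord0 (lift ord0 ord0)) :> 'I_4.
  by apply: val_inj; rewrite /= inordK.
rewrite sum_perm_lift.
under eq_bigr do rewrite sum_perm_lift.
under eq_bigr do under eq_bigr do rewrite sum_perm_lift.
under eq_bigr do under eq_bigr do under eq_bigr do rewrite sum_perm_lift.
under eq_bigr do under eq_bigr do under eq_bigr do under eq_bigr do rewrite sum_perm0.
under eq_bigr do under eq_bigr do under eq_bigr do under eq_bigr do
  rewrite !odd_lift_perm !lift_perm_lift !lift_perm_id odd_perm1.
by rewrite !big_ord_recl !big_ord0 /= /bump /= /perm4_table !big_cons big_nil /= !addr0 !addrA.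
Qed.

Definition std5_monomial (p : seq nat) : expr :=
  (let v i := EVar (nth 0 p i).+1 in EBr (EBr (EBr (EBr (EVar 0) (v 0)) (v 1)) (v 2)) (v 3))%N.

Definition std5_target : seq (int * expr) :=
  [seq ((-1) ^+ p.1 * 6, std5_monomial p.2) | p : bool * seq nat <- perm4_table].

Declare Scope lie_expr_scope.
Delimit Scope lie_expr_scope with lie.
Definition expr_of_uint (n : Number.uint) : expr := EVar (Nat.of_num_uint n).
Definition uint_of_expr (t : expr) : option Number.uint :=
  if t is EVar n then Some (Nat.to_num_uint n) else None.
Number Notation expr expr_of_uint uint_of_expr : lie_expr_scope.
Bind Scope lie_expr_scope with expr.
Arguments EBr (_ _)%_lie.
Local Notation "a * b" := (EBr a b) : lie_expr_scope.

Definition cocycle_inst (z : int) (a b c : expr) : int * (expr * expr * expr) := (z, (a, b, c)).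
Arguments cocycle_inst z%_Z (a b c)%_lie.

(* An entry [cocycle_inst z a b c] stands for z times the cocycle identity in a, b, c, the
   letters being 0 := y, 1..4 := x_1..x_4 and 5 := u. Together with the target 6 phi(std5 x y, u)
   these instances cancel once every bracket is expanded, by antisymmetry and the Jacobi
   identity, into left-normed words starting with their least letter. *)
Definition cocycle_certificate : seq (int * (expr * expr * expr)) := [::
  cocycle_inst (-2) 0 (1 * 3 * 2 * 5) 4;
  cocycle_inst (-1) (0 * 4) (1 * 3) (2 * 5);
  cocycle_inst 1 (0 * 4) (1 * 3 * 5) 2;
  cocycle_inst 1 (0 * 4 * 5) (1 * 3) 2;
  cocycle_inst 2 (0 * 5 * 3) (1 * 4) 2;
  cocycle_inst 2 0 (1 * 4 * 2 * 5) 3;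
  cocycle_inst 1 (0 * 3) (1 * 4) (2 * 5);
  cocycle_inst (-1) (0 * 3) (1 * 4 * 5) 2;
  cocycle_inst (-1) (0 * 2) (1 * 4) (3 * 5);
  cocycle_inst 1 (0 * 2) (1 * 4 * 5) 3;
  cocycle_inst 1 (0 * 2 * 5) (1 * 4) 3;
  cocycle_inst 2 (0 * 5 * 3) 1 (2 * 4);
  cocycle_inst (-1) (0 * 3 * 4) (1 * 5) 2;
  cocycle_inst 1 (0 * 4) (1 * 2) (3 * 5);
  cocycle_inst (-1) (0 * 4 * 5) (1 * 2) 3;
  cocycle_inst (-1) (0 * 4) (1 * 2 * 5) 3;
  cocycle_inst 1 (0 * 3 * 2) 1 (4 * 5);
  cocycle_inst 1 (0 * 3 * 2) (1 * 5) 4;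
  cocycle_inst (-1) (0 * 3 * 2 * 5) 1 4;
  cocycle_inst (-1) (0 * 2 * 3) 1 (4 * 5);
  cocycle_inst (-1) (0 * 2 * 3) (1 * 5) 4;
  cocycle_inst 1 (0 * 2 * 3 * 5) 1 4;
  cocycle_inst 1 (0 * 2) (1 * 3) (4 * 5);
  cocycle_inst (-1) (0 * 2) (1 * 3 * 5) 4;
  cocycle_inst (-1) (0 * 2 * 5) (1 * 3) 4;
  cocycle_inst (-1) (0 * 4) (1 * 5) (2 * 3);
  cocycle_inst 1 (0 * 4 * 3) (1 * 5) 2;
  cocycle_inst (-2) 0 (1 * 5 * 2 * 3) 4;
  cocycle_inst 1 (0 * 3) (1 * 5) (2 * 4);
  cocycle_inst (-2) (0 * 4 * 2 * 3) 1 5;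
  cocycle_inst (-1) (0 * 4 * 2) 1 (3 * 5);
  cocycle_inst 1 (0 * 4 * 2 * 5) 1 3;
  cocycle_inst (-2) (0 * 5 * 4) 1 (2 * 3);
  cocycle_inst (-1) (0 * 3) (1 * 2) (4 * 5);
  cocycle_inst 1 (0 * 3) (1 * 2 * 5) 4;
  cocycle_inst 1 (0 * 3 * 5) (1 * 2) 4;
  cocycle_inst 2 (0 * 5 * 2) (1 * 3) 4;
  cocycle_inst 1 (0 * 4) 1 (2 * 3 * 5);
  cocycle_inst 1 (0 * 3 * 4 * 5) 1 2;
  cocycle_inst (-1) (0 * 3 * 4) 1 (2 * 5);
  cocycle_inst 1 (0 * 4 * 5) 1 (2 * 3);
  cocycle_inst 1 (0 * 4 * 3) 1 (2 * 5);
  cocycle_inst (-1) (0 * 4 * 3 * 5) 1 2;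
  cocycle_inst (-1) (0 * 4 * 2) (1 * 5) 3;
  cocycle_inst 1 (0 * 2 * 4) 1 (3 * 5);
  cocycle_inst (-1) (0 * 2 * 4 * 5) 1 3;
  cocycle_inst 1 (0 * 2 * 4) (1 * 5) 3;
  cocycle_inst (-1) (0 * 3) 1 (2 * 4 * 5);
  cocycle_inst 1 (0 * 2) 1 (3 * 4 * 5);
  cocycle_inst 2 0 (1 * 5 * 3 * 2) 4;
  cocycle_inst 2 (0 * 4 * 3 * 2) 1 5;
  cocycle_inst (-2) (0 * 4 * 5 * 1) 2 3;
  cocycle_inst (-2) 0 (1 * 5 * 4 * 2) 3;
  cocycle_inst (-4) (0 * 4 * 3) (1 * 2) 5;
  cocycle_inst 2 (0 * 4 * 5 * 2) 1 3;
  cocycle_inst (-2) 0 (1 * 3 * 5) (2 * 4);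
  cocycle_inst (-2) 0 (1 * 3 * 5 * 4) 2;
  cocycle_inst 2 0 (1 * 3 * 5 * 2) 4;
  cocycle_inst (-2) (0 * 2 * 5 * 4) 1 3;
  cocycle_inst 4 (0 * 2 * 3) (1 * 4) 5;
  cocycle_inst (-2) (0 * 3 * 4 * 2) 1 5;
  cocycle_inst (-2) 0 (1 * 4 * 5 * 2) 3;
  cocycle_inst 4 (0 * 3 * 4) (1 * 2) 5;
  cocycle_inst (-2) (0 * 3 * 5 * 2) 1 4;
  cocycle_inst (-4) (0 * 3 * 2) (1 * 4) 5;
  cocycle_inst (-2) 0 (1 * 2) (3 * 4 * 5);
  cocycle_inst 2 0 1 (2 * 4 * 5 * 3);
  cocycle_inst 2 0 (1 * 5 * 2 * 4) 3;
  cocycle_inst (-2) 0 (1 * 2 * 4 * 5) 3;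
  cocycle_inst 4 (0 * 4 * 2) (1 * 3) 5;
  cocycle_inst (-4) (0 * 2 * 4) (1 * 3) 5;
  cocycle_inst 2 (0 * 3 * 2 * 4) 1 5;
  cocycle_inst (-1) (0 * 1) (2 * 4 * 5) 3;
  cocycle_inst (-1) (0 * 4 * 1 * 5) 2 3;
  cocycle_inst 2 (0 * 5 * 1) 2 (3 * 4);
  cocycle_inst 2 (0 * 5 * 1) (2 * 4) 3;
  cocycle_inst (-2) (0 * 5 * 1) (2 * 3) 4;
  cocycle_inst 1 (0 * 1) (2 * 4) (3 * 5);
  cocycle_inst 1 (0 * 4 * 1) 2 (3 * 5);
  cocycle_inst 1 (0 * 4 * 1) (2 * 5) 3;
  cocycle_inst 2 0 (1 * 4 * 5) (2 * 3);
  cocycle_inst 2 0 (1 * 4 * 5 * 3) 2;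
  cocycle_inst 2 0 (1 * 2 * 5) (3 * 4);
  cocycle_inst 2 (0 * 2 * 5 * 3) 1 4;
  cocycle_inst 2 0 (1 * 2 * 3 * 5) 4;
  cocycle_inst (-2) (0 * 5 * 4) (1 * 3) 2;
  cocycle_inst (-2) (0 * 5 * 2) 1 (3 * 4);
  cocycle_inst (-2) (0 * 5 * 2) (1 * 4) 3;
  cocycle_inst 2 (0 * 5 * 4) (1 * 2) 3;
  cocycle_inst (-4) (0 * 4 * 1) (2 * 3) 5;
  cocycle_inst (-1) (0 * 1 * 4) 2 (3 * 5);
  cocycle_inst (-1) (0 * 1 * 4) (2 * 5) 3;
  cocycle_inst 4 (0 * 1 * 4) (2 * 3) 5;
  cocycle_inst (-2) (0 * 5 * 3) (1 * 2) 4;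
  cocycle_inst 2 (0 * 1 * 5 * 4) 2 3;
  cocycle_inst (-2) 0 1 (2 * 3 * 5 * 4);
  cocycle_inst 1 (0 * 1) (2 * 3 * 5) 4;
  cocycle_inst 2 (0 * 3 * 5 * 1) 2 4;
  cocycle_inst 1 (0 * 3 * 1 * 5) 2 4;
  cocycle_inst (-2) (0 * 1 * 5 * 3) 2 4;
  cocycle_inst (-1) (0 * 1) (2 * 3) (4 * 5);
  cocycle_inst 1 (0 * 1 * 4 * 5) 2 3;
  cocycle_inst (-1) (0 * 1 * 3 * 5) 2 4;
  cocycle_inst 4 (0 * 3 * 1) (2 * 4) 5;
  cocycle_inst (-1) (0 * 3 * 1) 2 (4 * 5);
  cocycle_inst (-1) (0 * 3 * 1) (2 * 5) 4;
  cocycle_inst (-4) (0 * 1 * 3) (2 * 4) 5;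
  cocycle_inst 1 (0 * 1 * 3) 2 (4 * 5);
  cocycle_inst 1 (0 * 1 * 3) (2 * 5) 4;
  cocycle_inst (-2) (0 * 4 * 3 * 1) 2 5;
  cocycle_inst (-2) 0 (1 * 4) (2 * 3 * 5);
  cocycle_inst 2 0 (1 * 3) (2 * 4 * 5);
  cocycle_inst 2 (0 * 4 * 1 * 3) 2 5;
  cocycle_inst 2 (0 * 3 * 4 * 1) 2 5;
  cocycle_inst (-2) (0 * 3 * 1 * 4) 2 5;
  cocycle_inst (-1) (0 * 1) 2 (3 * 4 * 5);
  cocycle_inst 1 (0 * 1 * 5) (2 * 3) 4;
  cocycle_inst (-1) (0 * 1 * 5) (2 * 4) 3;
  cocycle_inst (-2) 0 1 (2 * 5 * 3 * 4);
  cocycle_inst 2 0 (1 * 2 * 5 * 4) 3;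
  cocycle_inst 2 (0 * 3 * 5 * 4) 1 2;
  cocycle_inst (-2) 0 (1 * 5 * 3 * 4) 2;
  cocycle_inst (-2) (0 * 2 * 3 * 4) 1 5;
  cocycle_inst 2 (0 * 1 * 3 * 4) 2 5;
  cocycle_inst 2 0 1 (2 * 5 * 4 * 3);
  cocycle_inst (-2) (0 * 4 * 5 * 3) 1 2;
  cocycle_inst (-2) 0 (1 * 2 * 5 * 3) 4;
  cocycle_inst (-1) (0 * 2) (1 * 5) (3 * 4);
  cocycle_inst 1 (0 * 1) (2 * 5) (3 * 4);
  cocycle_inst 1 (0 * 2 * 5) 1 (3 * 4);
  cocycle_inst 2 0 (1 * 5 * 4 * 3) 2;
  cocycle_inst 2 (0 * 2 * 4 * 3) 1 5;
  cocycle_inst (-1) (0 * 1 * 5) 2 (3 * 4);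
  cocycle_inst (-2) (0 * 1 * 4 * 3) 2 5;
  cocycle_inst (-1) (0 * 3 * 5) (1 * 4) 2;
  cocycle_inst (-1) (0 * 3 * 5) 1 (2 * 4);
  cocycle_inst (-2) (0 * 2 * 5 * 1) 3 4;
  cocycle_inst (-1) (0 * 2 * 1 * 5) 3 4;
  cocycle_inst 2 (0 * 1 * 5 * 2) 3 4;
  cocycle_inst 1 (0 * 1 * 2 * 5) 3 4;
  cocycle_inst (-4) (0 * 2 * 1) (3 * 4) 5;
  cocycle_inst 1 (0 * 2 * 1) 3 (4 * 5);
  cocycle_inst 1 (0 * 2 * 1) (3 * 5) 4;
  cocycle_inst 4 (0 * 1 * 2) (3 * 4) 5;
  cocycle_inst (-1) (0 * 1 * 2) 3 (4 * 5);
  cocycle_inst (-1) (0 * 1 * 2) (3 * 5) 4;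
  cocycle_inst 2 (0 * 4 * 2 * 1) 3 5;
  cocycle_inst (-2) 0 1 (2 * 4 * 3 * 5);
  cocycle_inst (-2) 0 (1 * 4 * 3 * 5) 2;
  cocycle_inst 2 0 1 (2 * 3 * 4 * 5);
  cocycle_inst 2 0 (1 * 3 * 4 * 5) 2;
  cocycle_inst (-2) (0 * 4 * 1 * 2) 3 5;
  cocycle_inst (-2) (0 * 2 * 4 * 1) 3 5;
  cocycle_inst 2 (0 * 2 * 1 * 4) 3 5;
  cocycle_inst 2 (0 * 1 * 4 * 2) 3 5;
  cocycle_inst (-2) (0 * 1 * 2 * 4) 3 5;
  cocycle_inst (-2) (0 * 3 * 2 * 1) 4 5;
  cocycle_inst 2 (0 * 3 * 1 * 2) 4 5;
  cocycle_inst 2 (0 * 2 * 3 * 1) 4 5;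
  cocycle_inst (-2) (0 * 2 * 1 * 3) 4 5;
  cocycle_inst (-2) (0 * 1 * 3 * 2) 4 5;
  cocycle_inst 2 (0 * 1 * 2 * 3) 4 5].

Lemma cocycle_certificate_ok :
  zero_comb (target_comb std5_target (EVar 5) ++ cert_comb cocycle_certificate).
Proof. by vm_compute. Qed.

Section CocycleIdeal.
Variables (K : fieldType) (L : lmodType K) (br : L -> L -> L) (phi : L -> L -> K).
Hypotheses (brL : is_lie_bracket br) (phi_coc : comm_2cocycle br phi).
Hypothesis six_neq0 : 6%:R != 0 :> K.

Lemma phi_std5 x y u : phi (std5 br x y) u = 0.
Proof.
pose e n := if n is k.+1 then if (k < 4)%N then x (inord k) else u else y.
have := certificate_sound brL phi_coc e cocycle_certificate_ok.
rewrite big_map => cert.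
have : 6%:R * phi (std5 br x y) u = 0.
  pose F b n0 n1 n2 n3 := 6%:R * phi (((-1) ^+ b : K) *:
    br (br (br (br y (e n0.+1)) (e n1.+1)) (e n2.+1)) (e n3.+1)) u.
  rewrite -[RHS]cert /std5 (phi_suml phi_coc) mulr_sumr.
  rewrite (eq_bigr (fun s : 'S_4 =>
    F (odd_perm s) (s (inord 0)) (s (inord 1)) (s (inord 2)) (s (inord 3)))) => [|s _]; last first.
    by rewrite /F /e /= !ltn_ord !inord_val.
  rewrite (sum_perm4 F); apply: eq_bigr => -[b p] _.
  by case: b; rewrite /F /= (phiZl phi_coc) ?expr0 ?expr1 ?mul1r ?mulN1r ?mulrN ?mulrNz
    -pmulrn mulr_natl.
by move/eqP; rewrite mulf_eq0 (negbTE six_neq0) => /eqP.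
Qed.

(* The largest ideal of L contained in the radical of phi. *)
Definition phi_ideal (a : L) : Prop := forall (zs : seq L) (u : L), phi (foldl br a zs) u = 0.

Lemma phi_ideal_subspace : subspace phi_ideal.
Proof.
split=> [zs u | c p q Ip Iq zs u].
  by rewrite (foldl_br0 brL) (phi0l phi_coc).
by rewrite (foldl_brD brL) (foldl_brZ brL) (phiDl phi_coc) (phiZl phi_coc) Ip Iq mulr0 addr0.
Qed.

Lemma phi_ideal_br p z : phi_ideal p -> phi_ideal (br p z).
Proof. by move=> Ip zs; apply: (Ip (z :: zs)). Qed.

Lemma phi_ideal_std5 x y : phi_ideal (std5 br x y).
Proof.
move=> zs; elim: zs x y => [|z zs IH] x y u /=; first exact: phi_std5.
rewrite (br_std5 brL) !big_ord_recl big_ord0 addr0 !(foldl_brD brL) !(phiDl phi_coc) !IH.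
by rewrite !addr0.
Qed.

End CocycleIdeal.

Theorem lemma2p1 (K : fieldType) (L : lmodType K) (br : L -> L -> L) :
  2%N \notin [pchar K] -> 3%N \notin [pchar K] ->
  is_lie_bracket br ->
  (exists phi : L -> L -> K, comm_2cocycle br phi /\ exists x y : L, phi x y != 0) ->
  exists (M : lmodType K) (brM : M -> M -> M) (f : L -> M),
    [/\ is_lie_bracket brM, lie_hom br brM f,
        (forall m : M, exists l : L, f l = m),
        (exists m : M, m != 0) &
        satisfies_std5 brM].
Proof.
move=> char2 char3 brL [phi [phi_coc [x0 [y0 phi_x0y0]]]].
have six_neq0 : 6%:R != 0 :> K.
  by rewrite (_ : 6 = 2 * 3)%N // natrM mulf_neq0 // natf_neq0_pchar pnatE.
have I_sub := phi_ideal_subspace brL phi_coc.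
have I_br := @phi_ideal_br K L br phi.
exists (quot I_sub), (qbr br I_sub), (qpi I_sub); split.
- exact: qbr_lie.
- exact: qpi_lie_hom.
- by move=> m; exists (qval m); apply: qvalK.
- exists (qpi I_sub x0); apply/eqP => /(qpi_inj (b := 0)) /(_ [::] y0).
  by rewrite subr0 => /= phi0; rewrite phi0 eqxx in phi_x0y0.
- exact: quot_std5 (phi_ideal_std5 brL phi_coc six_neq0).
Qed.
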